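(* If $\Gamma_G$ is population monotonic, then $G$ has no induced subgraph isomorphic to the co-banner graph.
   Context: $G=(V,E;w)$ is a finite simple graph with edge weights $w:E\to\mathbb{R}$, $w_e>0$ for all $e\in E$. The matching game on $G$ is the cooperative game $\Gamma_G=(N,\gamma)$ with player set $N=V$ and, for $S\subseteq N$, $\gamma(S)$ equal to the maximum weight of a matching in the induced subgraph $G[S]$ (so $\gamma(\emptyset)=0$). A population monotonic allocation scheme (PMAS) is a family $(\boldsymbol{x}_S)_{\emptyset\neq S\subseteq N}$ with $\boldsymbol{x}_S=(x_{S,i})_{i\in S}\in\mathbb{R}^S$ such that (efficiency) $\sum_{i\in S}x_{S,i}=\gamma(S)$ for every nonempty $S\subseteq N$, and (monotonicity) $x_{S,i}\le x_{T,i}$ whenever $\emptyset\ne S\subseteq T\subseteq N$ and $i\in S$. $\Gamma_G$ is called population monotonic if it admits a PMAS. The co-banner graph is the graph on vertices $\{1,2,3,4,5\}$ with edge set exactly $\{12,23,34,35,45\}$ (a triangle $345$ with a pendant path $3$–$2$–$1$). *)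

From mathcomp Require Import all_boot all_order all_algebra.
Set Implicit Arguments. Unset Strict Implicit. Unset Printing Implicit Defensive.
Import Order.TTheory GRing.Theory Num.Theory.
Local Open Scope ring_scope.

(* A finite simple graph on the vertex type V is given by its edge set
   E : {set {set V}}, every edge being a 2-element subset of V.
   Edge weights are w : {set V} -> R (only values on E matter). *)

Definition simple_graph (V : finType) (E : {set {set V}}) : Prop :=
  forall f, f \in E -> #|f| = 2%N.

Definition matching_in (V : finType) (E : {set {set V}}) (S : {set V})
    (M : {set {set V}}) : bool :=
  [&& M \subset E,
      [forall f in M, f \subset S] &
      [forall f in M, forall g in M, (f != g) ==> [disjoint f & g]]].

Definition gamma (R : realDomainType) (V : finType) (E : {set {set V}})
    (w : {set V} -> R) (S : {set V}) : R :=
  \big[Num.max/0]_(M : {set {set V}} | matching_in E S M) \sum_(f in M) w f.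

(* Population monotonic allocation scheme: x S i is the payoff of i in S
   (only meaningful for i \in S). *)
Definition is_PMAS (R : realDomainType) (V : finType) (E : {set {set V}})
    (w : {set V} -> R) (x : {set V} -> V -> R) : Prop :=
  (forall S : {set V}, S != set0 -> \sum_(i in S) x S i = gamma E w S) /\
  (forall (S T : {set V}) (i : V), S != set0 -> S \subset T -> i \in S ->
      x S i <= x T i).

Definition population_monotonic (R : realDomainType) (V : finType)
    (E : {set {set V}}) (w : {set V} -> R) : Prop :=
  exists x : {set V} -> V -> R, is_PMAS E w x.

(* Co-banner graph on 'I_5, vertex k standing for vertex k+1 of the paper:
   edges 12, 23, 34, 35, 45  ~>  01, 12, 23, 24, 34. *)
Definition cobanner_edge (i j : 'I_5) : bool :=
  let a := nat_of_ord i in let b := nat_of_ord j in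
  [|| (a == 0) && (b == 1), (a == 1) && (b == 2), (a == 2) && (b == 3),
      (a == 2) && (b == 4) | (a == 3) && (b == 4)]%N.

Definition cobanner_adj (i j : 'I_5) : bool :=
  cobanner_edge i j || cobanner_edge j i.

Definition has_induced_cobanner (V : finType) (E : {set {set V}}) : Prop :=
  exists phi : 'I_5 -> V, injective phi /\
    forall i j : 'I_5, i != j -> (([set phi i; phi j] \in E) = cobanner_adj i j).

From mathcomp Require Import all_boot all_order all_algebra.
From mathcomp Require Import lra.
Import Order.TTheory GRing.Theory Num.Theory.
Local Open Scope ring_scope.
Set Implicit Arguments. Unset Strict Implicit. Unset Printing Implicit Defensive.

(* Number the co-banner 0 - 1 - 2 < {3, 4}: a triangle 2 3 4 with the pendant
   path 2 - 1 - 0, with weights a, b, c, d, e on the edges 01, 12, 23, 24, 34.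
   Then, with m = gamma{2,3,4} and q = gamma{1,2,3,4}: the edge 34 leaves
   vertex 2 at most m - e in the triangle, while the paths 1-2-3 and 1-2-4 give
   it at least min(b, c) and min(b, d); as m = max(c, d, e) this forces
   b + e <= m.  Vertex 1 is pendant in {1,2,3,4}, so q <= max(m, b + e) = m,
   whereas the path 0-1-2 gives vertex 1 at least min(a, b) > 0 on top of the
   m secured by the triangle: q >= min(a, b) + m, a contradiction. *)

Section SmallSums.

Variables (T : finType) (A : nmodType) (F : T -> A).

Lemma sum_set2 (u v : T) : u != v -> \sum_(i in [set u; v]) F i = F u + F v.
Proof. by move=> uv; rewrite big_setU1 ?inE // big_set1. Qed.

Lemma sum_set3 (u v t : T) : u != v -> u != t -> v != t ->
  \sum_(i in [set u; v; t]) F i = F u + F v + F t.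
Proof.
move=> uv ut vt; rewrite [[set u; v; t]]setUC big_setU1 /= ?sum_set2 1?addrC //.
by rewrite !inE negb_or !(eq_sym t) ut vt.
Qed.

Lemma sum_set4 (u v t s : T) : u != v -> u != t -> u != s -> v != t -> v != s -> t != s ->
  \sum_(i in [set u; v; t; s]) F i = F u + F v + F t + F s.
Proof.
move=> uv ut us vt vs ts; rewrite [[set u; v; t; s]]setUC big_setU1 /= ?sum_set3 1?addrC //.
by rewrite !inE !negb_or !(eq_sym s) us vs ts.
Qed.

End SmallSums.

Section MaxWeightMatching.

Variables (R : realDomainType) (V : finType) (E : {set {set V}}) (w : {set V} -> R).
Hypothesis E_simple : simple_graph E.

Notation gamma := (gamma E w).
Notation matching_in := (matching_in E).

Lemma matching_restrict (S S' : {set V}) (M M' : {set {set V}}) :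
  matching_in S M -> M' \subset M -> (forall f, f \in M' -> f \subset S') ->
  matching_in S' M'.
Proof.
move=> /and3P[ME _ /forall_inP Mdisj] sM'M M'S'.
apply/and3P; split; first exact: subset_trans sM'M ME.
- by apply/forall_inP.
- apply/forall_inP => f fM'; apply/forall_inP => g gM'.
  by have /forall_inP := Mdisj f (subsetP sM'M f fM'); apply; exact: subsetP gM'.
Qed.

Lemma gamma_ge_matching (S : {set V}) (M : {set {set V}}) :
  matching_in S M -> \sum_(f in M) w f <= gamma S.
Proof. by move=> MS; apply: le_bigmax_cond. Qed.

Lemma gamma_ge0 (S : {set V}) : 0 <= gamma S.
Proof.
have empty_matching : matching_in S set0.
  by apply/and3P; split; [exact: sub0set | apply/forall_inP..] => f; rewrite inE.
by have := gamma_ge_matching empty_matching; rewrite big_set0.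
Qed.

Lemma gamma_ge_edge (S f : {set V}) : f \in E -> f \subset S -> w f <= gamma S.
Proof.
move=> fE fS; have <- : \sum_(g in [set f]) w g = w f by rewrite big_set1.
apply: gamma_ge_matching.
apply/and3P; split; first by rewrite sub1set.
- by apply/forall_inP => g; rewrite inE => /eqP->.
- apply/forall_inP => g; rewrite inE => /eqP->.
  by apply/forall_inP => h; rewrite inE => /eqP->; rewrite eqxx.
Qed.

Lemma gamma_mono (S S' : {set V}) : S \subset S' -> gamma S <= gamma S'.
Proof.
move=> sSS'; apply: bigmax_le; first exact: gamma_ge0.
move=> M MS; apply: gamma_ge_matching; apply: (matching_restrict MS (subxx _)).
by case/and3P: MS => _ /forall_inP MS _ f /MS fS; exact: subset_trans sSS'.
Qed.

Lemma edge_neq (u v : V) : [set u; v] \in E -> u != v.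
Proof. by move=> /E_simple; apply: contra_eqN => /eqP->; rewrite setUid cards1. Qed.

Lemma edge_at (f : {set V}) (u : V) : f \in E -> u \in f -> exists y, f = [set u; y].
Proof.
move=> /E_simple /eqP /cards2P[a [b [_ ->]]]; rewrite !inE => /orP[]/eqP->.
  by exists b.
by exists a; rewrite setUC.
Qed.

Lemma gamma_sub1 (S : {set V}) (v : V) : S \subset [set v] -> gamma S = 0.
Proof.
move=> Sv; apply/le_anti; rewrite gamma_ge0 andbT; apply: bigmax_le => // M.
case/and3P=> /subsetP ME /forall_inP MS _; rewrite big_pred0 // => f.
apply/negbTE/negP => fM; have := subset_leq_card (subset_trans (MS f fM) Sv).
by rewrite cards1 E_simple ?ME.
Qed.

(* The recursion behind maximum-weight matchings: in an optimal matching of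
   G[S] the vertex u is either unmatched or matched to some neighbour y. *)
Lemma gamma_le_del (u : V) (S : {set V}) (B : R) :
  gamma (S :\ u) <= B ->
  (forall y, y \in S -> [set u; y] \in E -> w [set u; y] + gamma (S :\ u :\ y) <= B) ->
  gamma S <= B.
Proof.
move=> unmatched matched; apply: bigmax_le => [|M MS].
  exact: le_trans (gamma_ge0 _) unmatched.
have /and3P[/subsetP ME /forall_inP MsubS /forall_inP Mdisj] := MS.
case: (pickP [pred f in M | u \in f]) => [f /andP[fM uf] | u_free].
  have [y fuy] := edge_at (ME f fM) uf.
  have yS : y \in S by apply: (subsetP (MsubS f fM)); rewrite fuy !inE eqxx orbT.
  have uyE : [set u; y] \in E by rewrite -fuy ME.
  rewrite (big_setD1 f fM) /= fuy; apply: (le_trans _ (matched y yS uyE)).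
  rewrite lerD2l -fuy; apply: gamma_ge_matching.
  apply: (matching_restrict MS); first exact: subD1set.
  move=> g; rewrite !inE => /andP[gf gM]; apply/subsetP => z zg.
  have /forall_inP /(_ g gM) := Mdisj f fM; rewrite eq_sym gf => /disjointFl dfg.
  have zf := dfg z zg; rewrite !inE (subsetP (MsubS g gM)) // andbT.
  by apply/andP; split; apply: contraFneq zf => ->; rewrite fuy !inE eqxx ?orbT.
apply: le_trans unmatched; apply: gamma_ge_matching.
apply: matching_restrict MS (subxx _) _ => f fM; apply/subsetP => z zf.
rewrite !inE (subsetP (MsubS f fM)) // andbT.
by apply: contraFneq (u_free f) => <-; rewrite /= fM zf.
Qed.

Lemma gamma_le_pair (u v : V) (B : R) :
  0 <= B -> ([set u; v] \in E -> w [set u; v] <= B) -> gamma [set u; v] <= B.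
Proof.
move=> B_ge0 uvB; apply: (gamma_le_del (u := u)).
  rewrite (gamma_sub1 (v := v)) //.
  by apply/subsetP => z; rewrite !inE => /andP[/negPf->].
move=> y; rewrite !inE => /orP[]/eqP-> uyE; first by have := edge_neq uyE; rewrite eqxx.
rewrite (gamma_sub1 (v := v)) ?addr0 ?uvB //.
by apply/subsetP => z; rewrite !inE => /and3P[/negPf-> /negPf->].
Qed.

(* On three vertices a matching has at most one edge. *)
Lemma gamma_le_triple (u v t : V) (B : R) : 0 <= B ->
  ([set u; v] \in E -> w [set u; v] <= B) ->
  ([set u; t] \in E -> w [set u; t] <= B) ->
  ([set v; t] \in E -> w [set v; t] <= B) ->
  gamma [set u; v; t] <= B.
Proof.
move=> B_ge0 uvB utB vtB; apply: (gamma_le_del (u := u)).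
  apply: le_trans (gamma_le_pair B_ge0 vtB); apply: gamma_mono.
  by apply/subsetP => z; rewrite !inE => /andP[/negPf->].
move=> y; rewrite !inE -orbA => /or3P[]/eqP-> uyE; first by have := edge_neq uyE; rewrite eqxx.
- rewrite (gamma_sub1 (v := t)) ?addr0 ?uvB //.
  by apply/subsetP => z; rewrite !inE => /and3P[/negPf-> /negPf->].
- rewrite (gamma_sub1 (v := v)) ?addr0 ?utB //.
  by apply/subsetP => z; rewrite !inE => /and3P[/negPf-> /negPf->]; rewrite orbF.
Qed.

End MaxWeightMatching.

Section PopulationMonotonic.

Variables (R : realDomainType) (V : finType) (E : {set {set V}}) (w : {set V} -> R).
Variable x : {set V} -> V -> R.
Hypothesis E_simple : simple_graph E.
Hypothesis w_pos : forall f, f \in E -> 0 < w f.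
Hypothesis x_pmas : is_PMAS E w x.

Notation gamma := (gamma E w).

Lemma pmas_eff (S : {set V}) (i : V) : i \in S -> \sum_(j in S) x S j = gamma S.
Proof. by move=> iS; apply: x_pmas.1; apply/set0Pn; exists i. Qed.

Lemma pmas_mono (S S' : {set V}) (i : V) : i \in S -> S \subset S' -> x S i <= x S' i.
Proof. by move=> iS SS'; apply: x_pmas.2 => //; apply/set0Pn; exists i. Qed.

Lemma pmas_edge_le (S : {set V}) (u v : V) :
  [set u; v] \in E -> [set u; v] \subset S -> w [set u; v] <= x S u + x S v.
Proof.
move=> uvE uvS; have uv := edge_neq E_simple uvE.
apply: le_trans (gamma_ge_edge w uvE (subxx _)) _.
rewrite -(pmas_eff (set21 u v)) sum_set2 //.
by rewrite lerD // pmas_mono // ?set21 ?set22.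
Qed.

(* Indeed in {u, v, t} the pair
   {u, v} already claims w_uv of a total of at most max(w_uv, w_vt), which
   leaves t at most max(w_uv, w_vt) - w_uv, also in the smaller coalition {v, t}. *)
Lemma pmas_path (u v t : V) :
  [set u; v] \in E -> [set v; t] \in E -> [set u; t] \notin E -> u != t ->
  Num.min (w [set u; v]) (w [set v; t]) <= x [set v; t] v.
Proof.
move=> uvE vtE utE ut; set S := [set u; v; t].
have uv := edge_neq E_simple uvE; have vt := edge_neq E_simple vtE.
have gammaS : gamma S <= Num.max (w [set u; v]) (w [set v; t]).
  apply: gamma_le_triple => //; first by rewrite le_max ltW ?w_pos.
  - by rewrite le_max lexx.
  - by rewrite (negPf utE).
  - by rewrite le_max lexx orbT.
have effS : x S u + x S v + x S t = gamma S.
  by rewrite -sum_set3 // (pmas_eff (i := u)) // !inE eqxx.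
have uv_share : w [set u; v] <= x S u + x S v.
  by apply: pmas_edge_le => //; apply/subsetP => z; rewrite !inE => ->.
have t_mono : x [set v; t] t <= x S t.
  by apply: pmas_mono; rewrite ?set22 //; apply/subsetP => z; rewrite !inE => /orP[] ->; rewrite ?orbT.
have vt_share : w [set v; t] <= x [set v; t] v + x [set v; t] t.
  exact: pmas_edge_le.
case: (lerP (w [set u; v]) (w [set v; t])) gammaS => _ gammaS;
  by clear -effS uv_share t_mono vt_share gammaS; lra.
Qed.

End PopulationMonotonic.

(* The numerical heart of the argument, with m = gamma{2,3,4} and
   q = gamma{1,2,3,4}: the two path bounds force b + e <= m, and then the
   allocation of {1,2,3,4} would have to pay min(a, b) > 0 beyond its worth. *)
Lemma cobanner_arith (R : realDomainType) (a b c d e m q : R) :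
  0 < a -> 0 < b -> 0 < c -> 0 < d -> 0 < e ->
  Num.min b c + e <= m -> Num.min b d + e <= m -> m <= Num.max c (Num.max d e) ->
  Num.min a b + m <= q -> q <= Num.max m (b + e) -> False.
Proof.
move=> a_gt0 b_gt0 c_gt0 d_gt0 e_gt0 bc_m bd_m m_le q_ge q_le.
have be_m : b + e <= m.
  case: (lerP b c) bc_m => [_|cb] bc_m; first by [].
  case: (lerP b d) bd_m => [_|db] bd_m; first by [].
  by move: m_le; rewrite !le_max => /or3P[] m_le; clear -c_gt0 e_gt0 bc_m bd_m m_le; lra.
move: q_le; rewrite (max_l be_m) => q_le.
by case: (lerP a b) q_ge => _ q_ge; clear -a_gt0 b_gt0 q_ge q_le; lra.
Qed.

Section CoBanner.

Variables (R : realDomainType) (V : finType) (E : {set {set V}}) (w : {set V} -> R).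
Variable x : {set V} -> V -> R.
Hypothesis E_simple : simple_graph E.
Hypothesis w_pos : forall f, f \in E -> 0 < w f.
Hypothesis x_pmas : is_PMAS E w x.

Variables v0 v1 v2 v3 v4 : V.
Hypotheses (e01 : [set v0; v1] \in E) (e12 : [set v1; v2] \in E)
  (e23 : [set v2; v3] \in E) (e24 : [set v2; v4] \in E) (e34 : [set v3; v4] \in E).
Hypotheses (n02 : [set v0; v2] \notin E) (n13 : [set v1; v3] \notin E)
  (n14 : [set v1; v4] \notin E).
Hypotheses (d02 : v0 != v2) (d13 : v1 != v3) (d14 : v1 != v4).

Local Notation gamma := (gamma E w).
Local Notation a := (w [set v0; v1]).
Local Notation b := (w [set v1; v2]).
Local Notation c := (w [set v2; v3]).
Local Notation d := (w [set v2; v4]).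
Local Notation e := (w [set v3; v4]).
Local Notation T := [set v2; v3; v4].
Local Notation Q := [set v1; v2; v3; v4].

Let d12 : v1 != v2 := edge_neq E_simple e12.
Let d23 : v2 != v3 := edge_neq E_simple e23.
Let d24 : v2 != v4 := edge_neq E_simple e24.
Let d34 : v3 != v4 := edge_neq E_simple e34.

Lemma gamma_triangle_le : gamma T <= Num.max c (Num.max d e).
Proof.
apply: (gamma_le_triple E_simple) => // [|_|_|_]; rewrite ?le_max ?lexx ?orbT //.
by rewrite ltW ?w_pos.
Qed.

(* In {1,2,3,4} vertex 1 is pendant at 2: either it is unmatched, or it is
   matched to 2 and only the edge {3,4} remains. *)
Lemma gamma_paw_le : gamma Q <= Num.max (gamma T) (b + e).
Proof.
apply: (gamma_le_del E_simple (u := v1)).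
  rewrite le_max gamma_mono //.
  by apply/subsetP => z; rewrite !inE => /andP[/negPf->].
move=> y; rewrite !inE -!orbA => /or4P[]/eqP-> v1yE.
- by have := edge_neq E_simple v1yE; rewrite eqxx.
- have rest : Q :\ v1 :\ v2 \subset [set v3; v4].
    by apply/subsetP => z; rewrite !inE => /and3P[/negPf-> /negPf->].
  rewrite le_max lerD2l (le_trans (gamma_mono E w rest)) ?orbT //.
  by apply: (gamma_le_pair E_simple) => //; rewrite ltW ?w_pos.
- by move: n13; rewrite v1yE.
- by move: n14; rewrite v1yE.
Qed.

Let eff_T : x T v2 + x T v3 + x T v4 = gamma T.
Proof. by rewrite -sum_set3 // (pmas_eff x_pmas (i := v2)) // !inE eqxx. Qed.

Let eff_Q : x Q v1 + x Q v2 + x Q v3 + x Q v4 = gamma Q.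
Proof. by rewrite -sum_set4 // (pmas_eff x_pmas (i := v1)) // !inE eqxx. Qed.

Lemma triangle_apex_le : x T v2 + e <= gamma T.
Proof.
rewrite -eff_T -addrA lerD2l; apply: (pmas_edge_le E_simple x_pmas) => //.
by apply/subsetP => z; rewrite !inE => /orP[] ->; rewrite ?orbT.
Qed.

Lemma triangle_apex_ge : Num.min b c <= x T v2 /\ Num.min b d <= x T v2.
Proof.
split.
- apply: le_trans (pmas_path E_simple w_pos x_pmas e12 e23 n13 d13) _.
  by apply: (pmas_mono x_pmas); rewrite ?set21 //; apply/subsetP => z; rewrite !inE => ->.
- apply: le_trans (pmas_path E_simple w_pos x_pmas e12 e24 n14 d14) _.
  apply: (pmas_mono x_pmas); rewrite ?set21 //; apply/subsetP => z.
  by rewrite !inE => /orP[] ->; rewrite ?orbT.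
Qed.

(* The induced path 0 - 1 - 2 gives vertex 1 a positive share on top of what
   the triangle already secures in {1,2,3,4}. *)
Lemma gamma_paw_ge : Num.min a b + gamma T <= gamma Q.
Proof.
have TQ : T \subset Q.
  by apply/subsetP => z; rewrite !inE -!orbA => /or3P[] ->; rewrite ?orbT.
have mono_TQ i : i \in T -> x T i <= x Q i by move=> iT; exact: (pmas_mono x_pmas iT TQ).
rewrite -eff_T -eff_Q -!addrA; apply: lerD.
  apply: le_trans (pmas_path E_simple w_pos x_pmas e01 e12 n02 d02) _.
  apply: (pmas_mono x_pmas); rewrite ?set21 //.
  by apply/subsetP => z; rewrite !inE => /orP[] ->; rewrite ?orbT.
by rewrite !lerD ?mono_TQ // !inE eqxx ?orbT.
Qed.

Lemma cobanner_no_pmas : False.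
Proof.
have [bc_apex bd_apex] := triangle_apex_ge.
apply: (cobanner_arith (w_pos e01) (w_pos e12) (w_pos e23) (w_pos e24) (w_pos e34)
  _ _ gamma_triangle_le gamma_paw_ge gamma_paw_le);
  by apply: le_trans triangle_apex_le; rewrite lerD2r.
Qed.

End CoBanner.

Theorem mainTheorem11 (R : realFieldType) (V : finType) (E : {set {set V}})
    (w : {set V} -> R) :
  simple_graph E ->
  (forall f, f \in E -> 0 < w f) ->
  population_monotonic E w ->
  ~ has_induced_cobanner E.
Proof.
move=> E_simple w_pos [x x_pmas] [p [p_inj p_adj]].
have edge (i j : 'I_5) : i != j -> cobanner_adj i j -> [set p i; p j] \in E.
  by move=> ij; rewrite p_adj.
have non_edge (i j : 'I_5) : i != j -> ~~ cobanner_adj i j -> [set p i; p j] \notin E.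
  by move=> ij; rewrite p_adj.
have distinct (i j : 'I_5) : i != j -> p i != p j by rewrite (inj_eq p_inj).
apply: (cobanner_no_pmas E_simple w_pos x_pmas
  (v0 := p (@Ordinal 5 0 isT)) (v1 := p (@Ordinal 5 1 isT)) (v2 := p (@Ordinal 5 2 isT))
  (v3 := p (@Ordinal 5 3 isT)) (v4 := p (@Ordinal 5 4 isT)));
  by [apply: edge | apply: non_edge | apply: distinct].
Qed.
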